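(* Let $h\in\mathcal H$, $k_0=k_0(h)$, $h_0=h(k_0)$ and $h_1=h(k_0+1)$. Then $\operatorname{hdepth}(h)=k_0$ if and only if $h_0>h_1$.
   Context: $\mathcal H$ denotes the set of nonzero functions $h:\mathbb Z\to\mathbb Z_{\ge 0}$ such that $h(j)=0$ for all sufficiently negative $j$. For $h\in\mathcal H$ and integers $k\le d$, set $\beta_k^d(h)=\sum_{j\le k}(-1)^{k-j}\binom{d-j}{k-j}h(j)$, and $\operatorname{hdepth}(h)=\max\{d\in\mathbb Z:\ \beta_k^d(h)\ge 0\text{ for all integers }k\le d\}$. Also $k_0(h)=\min\{j: h(j)>0\}$. *)

From mathcomp Require Import all_boot all_order all_algebra.
Set Implicit Arguments. Unset Strict Implicit. Unset Printing Implicit Defensive.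
Import Order.TTheory GRing.Theory Num.Theory.
Local Open Scope ring_scope.

Definition inH (h : int -> nat) : Prop :=
  (exists j, h j <> 0%N) /\ (exists N : int, forall j, j < N -> h j = 0%N).

(* beta_k^d(h) = sum_{j <= k} (-1)^(k-j) C(d-j, k-j) h(j), where the sum is
   computed over the finite window N <= j <= k; this equals the infinite sum
   whenever h vanishes below N (the only way it is used). *)
Definition beta_from (N : int) (h : int -> nat) (k d : int) : int :=
  \sum_(i < (absz (k - N + 1)) | N + i%:Z <= k)
     let j := N + i%:Z in
     (-1) ^+ (absz (k - j)) * ('C(absz (d - j), absz (k - j)))%:Z * (h j)%:Z.

Definition hdepth_ok (N : int) (h : int -> nat) (d : int) : Prop :=
  forall k : int, k <= d -> 0 <= beta_from N h k d.

Definition is_hdepth (N : int) (h : int -> nat) (d : int) : Prop :=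
  hdepth_ok N h d /\ (forall d', hdepth_ok N h d' -> d' <= d).

Definition is_k0 (h : int -> nat) (k0 : int) : Prop :=
  (0 < h k0)%nat /\ (forall j, (0 < h j)%nat -> k0 <= j).

From mathcomp Require Import all_boot all_order all_algebra.
From mathcomp Require Import zify.
Import Order.TTheory GRing.Theory Num.Theory.
Local Open Scope ring_scope.

(* Let k0 be the least index with h k0 > 0.  Since h vanishes below k0, only
   the terms j >= k0 contribute to beta_k^d(h), which gives
     beta_k^d = 0 for k < k0,   beta_k0^d = h(k0),
     beta_(k0+1)^d = h(k0+1) - (d - k0) h(k0).
   Hence the condition "beta_k^d >= 0 for all k <= d" always holds for d = k0,
   so hdepth(h) >= k0, and hdepth(h) = k0 exactly when no d > k0 satisfies it.
   A d > k0 satisfying it forces h(k0+1) >= (d - k0) h(k0) >= h(k0); conversely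
   h(k0+1) >= h(k0) makes d = k0 + 1 satisfy it. *)

Definition beta_term (h : int -> nat) (k d j : int) : int :=
  (-1) ^+ (absz (k - j)) * ('C(absz (d - j), absz (k - j)))%:Z * (h j)%:Z.

Lemma is_k0_vanish_below {h : int -> nat} {k0 : int} :
  is_k0 h k0 -> forall j, j < k0 -> h j = 0%N.
Proof. by move=> [_ k0_min] j lt_j_k0; case: (posnP (h j)) => // /k0_min; lia. Qed.

Lemma is_k0_window {h : int -> nat} {N k0 : int} :
  (forall j, j < N -> h j = 0%N) -> is_k0 h k0 -> N <= k0.
Proof. by move=> h_below_N [h_k0_pos _]; case: (lerP N k0) => // /h_below_N; lia. Qed.

Section VanishingBelowK0.
Context {h : int -> nat} {N k0 : int}.
Hypothesis h_below : forall j : int, j < k0 -> h j = 0%N.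
Hypothesis N_le_k0 : N <= k0.

Lemma beta_from_k0 (k d : int) : k0 <= k ->
  beta_from N h k d = \sum_(i < absz (k - k0 + 1)%R) beta_term h k d (k0 + i%:Z).
Proof.
move=> k0_le_k; set m := absz (k0 - N).
rewrite /beta_from.
have -> : absz (k - N + 1)%R = (m + absz (k - k0 + 1)%R)%N by rewrite /m; lia.
rewrite big_split_ord /= big1 ?add0r => [|i _]; last first.
  by rewrite h_below ?mulr0 //; have := ltn_ord i; rewrite /m; lia.
apply: eq_big => [i|i _]; have -> : N + (m + i)%N = k0 + i%:Z by rewrite /m; lia.
  by apply/idP; have := ltn_ord i; lia.
by [].
Qed.

Lemma beta_below_k0 (k d : int) : k < k0 -> beta_from N h k d = 0.
Proof.
move=> lt_k_k0; rewrite /beta_from big1 // => i le_j_k.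
by rewrite h_below ?mulr0 //; lia.
Qed.

Lemma beta_at_k0 (d : int) : beta_from N h k0 d = (h k0)%:Z.
Proof.
rewrite beta_from_k0 // subrr add0r /= big_ord1 /beta_term addr0 subrr /=.
by rewrite bin0 mulr1 mul1r.
Qed.

Lemma beta_at_k0_succ (d : int) :
  beta_from N h (k0 + 1) d = (h (k0 + 1))%:Z - (absz (d - k0))%:Z * (h k0)%:Z.
Proof.
rewrite beta_from_k0 ?lerDl //.
have -> : absz (k0 + 1 - k0 + 1)%R = 2%N by lia.
rewrite big_ord_recr big_ord1 /beta_term /= addr0.
have -> : absz (k0 + 1 - k0)%R = 1%N by lia.
by rewrite subrr /= bin0 bin1 expr0 expr1 !mulN1r !mul1r mulNr addrC.
Qed.

Lemma beta_nonneg_upto_k0 (k d : int) : k <= k0 -> 0 <= beta_from N h k d.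
Proof.
case: (ltrP k k0) => [/beta_below_k0 -> // | le_k0_k le_k_k0].
have -> : k = k0 by lia.
by rewrite beta_at_k0.
Qed.

Lemma hdepth_ok_k0 : hdepth_ok N h k0.
Proof. by move=> k; apply: beta_nonneg_upto_k0. Qed.

Lemma hdepth_ok_above_k0 (d : int) :
  k0 < d -> hdepth_ok N h d -> (h k0 <= h (k0 + 1))%N.
Proof.
move=> lt_k0_d /(_ (k0 + 1) ltac:(lia)); rewrite beta_at_k0_succ.
have : (h k0)%:Z <= (absz (d - k0))%:Z * (h k0)%:Z.
  by rewrite -[X in X <= _]mul1r ler_wpM2r //; lia.
lia.
Qed.

Lemma hdepth_ok_k0_succ : (h k0 <= h (k0 + 1))%N -> hdepth_ok N h (k0 + 1).
Proof.
move=> h_incr k le_k_d; case: (lerP k k0) => [/beta_nonneg_upto_k0 // | lt_k0_k].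
have -> : k = k0 + 1 by lia.
rewrite beta_at_k0_succ; have -> : absz (k0 + 1 - k0)%R = 1%N by lia.
lia.
Qed.
End VanishingBelowK0.

Theorem corollary1p6 (h : int -> nat) (N k0 : int) :
  inH h ->
  (forall j, j < N -> h j = 0%N) ->
  is_k0 h k0 ->
  (is_hdepth N h k0 <-> ((h (k0 + 1))%:Z < (h k0)%:Z)).
Proof.
move=> _ h_below_N k0_first.
have h_below := is_k0_vanish_below k0_first.
have N_le_k0 := is_k0_window h_below_N k0_first.
split.
- move=> [_ k0_max]; rewrite ltz_nat ltnNge; apply/negP => h_incr.
  have := k0_max _ (hdepth_ok_k0_succ h_below N_le_k0 h_incr); lia.
- move=> h_decr; split; first exact: hdepth_ok_k0.
  move=> d d_ok; rewrite leNgt; apply/negP => lt_k0_d.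
  have := hdepth_ok_above_k0 h_below N_le_k0 d lt_k0_d d_ok; lia.
Qed.
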